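(* Let $R$ be an associative ring (not necessarily unital) which is solvable in the sense below. If there is an associative ring $S$ with $[S,S]\cong R$, then $R$ is nilpotent, i.e. $R^m=0$ for some $m$ (all products of $m$ elements of $R$ vanish). In particular, a nonzero commutative ring with identity is not isomorphic to $[S,S]$ for any associative ring $S$.
   Context: For an associative ring $R$, $[R,R]$ denotes the two-sided ideal of $R$ generated by all Lie commutators $xy-yx$, $x,y\in R$. Define $\delta^{(0)}(R)=R$ and $\delta^{(n)}(R)$ to be the two-sided ideal of $R$ generated by all commutators $ab-ba$ with $a,b\in\delta^{(n-1)}(R)$. $R$ is called solvable (in the sense of Jennings) if $\delta^{(n)}(R)=0$ for some $n$. *)

From mathcomp Require Import all_boot all_algebra.
Set Implicit Arguments. Unset Strict Implicit. Unset Printing Implicit Defensive.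
Import GRing.Theory.
Local Open Scope ring_scope.

Record rng := Rng {
  rng_car :> zmodType;
  rmul : rng_car -> rng_car -> rng_car;
  rmulA : associative rmul;
  rmulDl : left_distributive rmul +%R;
  rmulDr : right_distributive rmul +%R }.

Section RngDefs.
Variable R : rng.

Definition is_ideal (I : R -> Prop) : Prop :=
  [/\ I 0, (forall x y, I x -> I y -> I (x - y)),
      (forall r x, I x -> I (rmul r x)) & (forall r x, I x -> I (rmul x r))].

Definition gen_ideal (X : R -> Prop) : R -> Prop :=
  fun z => forall I, is_ideal I -> (forall x, X x -> I x) -> I z.

Definition commutator (x y : R) : R := rmul x y - rmul y x.

Definition comm_ideal_of (A : R -> Prop) : R -> Prop :=
  gen_ideal (fun z => exists a b, [/\ A a, A b & z = commutator a b]).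

Definition comm_ideal : R -> Prop := comm_ideal_of (fun _ => True).

Fixpoint derived (n : nat) : R -> Prop :=
  match n with
  | 0 => fun _ => True
  | n'.+1 => comm_ideal_of (derived n')
  end.

Definition jsolvable : Prop := exists n, forall x, derived n x -> x = 0.

Definition rprod (x : R) (s : seq R) : R := foldl (@rmul R) x s.

Definition rnilpotent : Prop :=
  exists m, forall (x : R) (s : seq R), size s = m -> rprod x s = 0.

End RngDefs.

(* [S,S] (with the ring structure induced from S) is isomorphic to R:
   an injective ring homomorphism R -> S whose image is exactly [S,S]. *)
Definition iso_comm_ideal (R S : rng) : Prop :=
  exists f : R -> S,
    [/\ injective f,
        (forall x y, f (x + y) = f x + f y),
        (forall x y, f (rmul x y) = rmul (f x) (f y)) &
        (forall z, comm_ideal z <-> exists x, f x = z)].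

Definition rng_of (T : pzRingType) : rng :=
  @Rng T (@GRing.mul T) (@mulrA T) (@mulrDl T) (@mulrDr T).

From mathcomp Require Import all_boot all_algebra.
Set Implicit Arguments. Unset Strict Implicit. Unset Printing Implicit Defensive.
Import GRing.Theory.
Local Open Scope ring_scope.

(* Write J = [S,S], identified with R.  If a subset J' of S is closed under
   multiplication by S on both sides, then for u, v in J' the product uv is
   central modulo the ideal N generated by the commutators of elements of J',
   and hence uv[S,S] lies in N.  Taking for J' the products of m+1 elements of
   J, which lie in delta^(k)(R) by induction, shows that products of 4m+5
   elements of J lie in delta^(k+1)(R); so the products of some fixed length
   lie in delta^(n)(R) = 0.  A nonzero unital commutative ring has
   delta^(1) = 0 but is not nilpotent, since 1 = 1^m. *)

Local Notation "x ** y" := (rmul x y) (at level 40, left associativity).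

Section RngTheory.
Variable T : rng.
Implicit Types (x y z : T) (I X Y : T -> Prop).

Lemma rmul0r x : 0 ** x = 0.
Proof. by apply: (addrI (0 ** x)); rewrite -rmulDl !addr0. Qed.

Lemma rmulr0 x : x ** 0 = 0.
Proof. by apply: (addrI (x ** 0)); rewrite -rmulDr !addr0. Qed.

Lemma rmulBl x y z : (x - y) ** z = x ** z - y ** z.
Proof. by apply: (addIr (y ** z)); rewrite -rmulDl !subrK. Qed.

Lemma rmulBr x y z : z ** (x - y) = z ** x - z ** y.
Proof. by apply: (addIr (z ** y)); rewrite -rmulDr !subrK. Qed.

Lemma ideal0 I : is_ideal I -> I 0.
Proof. by case. Qed.

Lemma idealB I x y : is_ideal I -> I x -> I y -> I (x - y).
Proof. by case=> _ IB _ _; apply: IB. Qed.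

Lemma idealN I x : is_ideal I -> I x -> I (- x).
Proof. by move=> idI Ix; rewrite -sub0r; apply: idealB => //; apply: ideal0. Qed.

Lemma idealD I x y : is_ideal I -> I x -> I y -> I (x + y).
Proof. by move=> idI Ix Iy; rewrite -[y]opprK; apply: idealB => //; apply: idealN. Qed.

Lemma idealMl I {x y} : is_ideal I -> I y -> I (x ** y).
Proof. by case=> _ _ IMl _; apply: IMl. Qed.

Lemma idealMr I {x y} : is_ideal I -> I x -> I (x ** y).
Proof. by case=> _ _ _ IMr; apply: IMr. Qed.

Lemma is_ideal_gen X : is_ideal (gen_ideal X).
Proof.
split=> [I idI _ | x y Hx Hy I idI XI | x y Hy I idI XI | x y Hx I idI XI].
- exact: ideal0.
- by apply: idealB => //; [apply: Hx | apply: Hy].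
- by apply: idealMl => //; apply: Hy.
- by apply: idealMr => //; apply: Hx.
Qed.

Lemma gen_ideal_sub X x : X x -> gen_ideal X x.
Proof. by move=> Xx I _; apply. Qed.

Lemma comm_ideal_ofS X Y :
  (forall x, X x -> Y x) -> forall x, comm_ideal_of X x -> comm_ideal_of Y x.
Proof.
move=> XY x Xx; apply: Xx (is_ideal_gen _) _ => _ [a [b [Xa Xb ->]]].
by apply: gen_ideal_sub; exists a, b; split; auto.
Qed.

End RngTheory.

Section IdealCongruence.
Variables (T : rng) (N : T -> Prop).
Hypothesis idN : is_ideal N.
Implicit Types x y z : T.

Definition eqmod x y := N (x - y).

Lemma eqmod_sym x y : eqmod x y -> eqmod y x.
Proof. by move=> Nxy; rewrite /eqmod -opprB; apply: idealN. Qed.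

Lemma eqmod_trans y x z : eqmod x y -> eqmod y z -> eqmod x z.
Proof. by move=> Nxy Nyz; rewrite /eqmod -(subrK y x) -addrA; apply: idealD. Qed.

Lemma eqmod_mull s x y : eqmod x y -> eqmod (s ** x) (s ** y).
Proof. by move=> Nxy; rewrite /eqmod -rmulBr; apply: idealMl. Qed.

Lemma eqmod_mulr s x y : eqmod x y -> eqmod (x ** s) (y ** s).
Proof. by move=> Nxy; rewrite /eqmod -rmulBl; apply: idealMr. Qed.

Lemma eqmod_mem x y : eqmod x y -> N y -> N x.
Proof. by move=> Nxy Ny; rewrite -(subrK y x); apply: idealD. Qed.

End IdealCongruence.

Section Products.
Variable S : rng.
Implicit Types (u v z : S) (J : S -> Prop).

Definition is_semigroup_ideal J :=
  (forall s u, J u -> J (s ** u)) /\ (forall s u, J u -> J (u ** s)).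

Lemma comm_ideal_of_mul2 J u v z : is_semigroup_ideal J -> J u -> J v ->
  comm_ideal z -> comm_ideal_of J (u ** (v ** z)).
Proof.
move=> [Jl Jr] Ju Jv Hz; set N := comm_ideal_of J.
have idN : is_ideal N by apply: is_ideal_gen.
have comm p q : J p -> J q -> eqmod N (p ** q) (q ** p).
  by move=> Jp Jq; apply: gen_ideal_sub; exists p, q.
have central p q s : J p -> J q -> eqmod N (p ** q ** s) (s ** p ** q).
  move=> Jp Jq; have e1 := comm _ _ Jp (Jr s _ Jq).
  have e2 := comm _ _ Jq (Jl s _ Jp); rewrite !rmulA in e1 e2.
  exact: (eqmod_trans idN e1 e2).
pose Q x := N (u ** (v ** x)).
have idQ : is_ideal Q.
  split; rewrite /Q.
  - by rewrite !rmulr0; apply: ideal0 idN.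
  - by move=> x y Qx Qy; rewrite !rmulBr; apply: (idealB idN).
  - move=> s x Qx; rewrite !rmulA; apply: (eqmod_mem idN (eqmod_mulr idN x (central _ _ s Ju Jv))).
    by rewrite -!rmulA; apply: (idealMl idN).
  - by move=> s x Qx; rewrite !rmulA; apply: (idealMr idN); rewrite -!rmulA.
apply: (Hz Q idQ) => _ [a [b [_ _ ->]]].
rewrite /Q /commutator !rmulBr !rmulA.
change (eqmod N (u ** v ** a ** b) (u ** v ** b ** a)).
(* uvab = a(uv)b = a(vu)b = (ua)(vb) = (vb)(ua) = (bu)(va) = (uv)ba modulo N *)
apply: (eqmod_trans idN (eqmod_mulr idN b (central _ _ a Ju Jv))).
apply: (eqmod_trans idN (y := a ** v ** u ** b)).
  by have := eqmod_mulr idN b (eqmod_mull idN a (comm _ _ Ju Jv)); rewrite !rmulA.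
apply: (eqmod_trans idN (y := u ** a ** v ** b)).
  by apply: (eqmod_sym idN); have := eqmod_mulr idN b (comm _ _ Ju (Jl a _ Jv)); rewrite !rmulA.
apply: (eqmod_trans idN (y := v ** b ** u ** a)).
  by have := comm _ _ (Jr a _ Ju) (Jr b _ Jv); rewrite !rmulA.
apply: (eqmod_trans idN (y := b ** u ** v ** a)).
  by have := eqmod_mulr idN a (comm _ _ Jv (Jl b _ Ju)); rewrite !rmulA.
exact: (eqmod_sym idN (eqmod_mulr idN a (central _ _ b Ju Jv))).
Qed.

(* [cprod n] is the set of left-normed products of n.+1 elements of [S,S]. *)
Fixpoint cprod n : S -> Prop :=
  if n is n'.+1 then fun z => exists a b, [/\ cprod n' a, comm_ideal b & z = a ** b]
  else @comm_ideal S.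

Lemma cprod_comm_ideal n z : cprod n z -> comm_ideal z.
Proof.
case: n => [|n] //= [a [b [_ Hb ->]]].
exact: idealMl (is_ideal_gen _) Hb.
Qed.

Lemma cprod_semigroup_ideal n : is_semigroup_ideal (cprod n).
Proof.
split=> s u.
  elim: n u => [|n IH] u /=; first exact: idealMl (is_ideal_gen _).
  by move=> [a [b [Ha Hb ->]]]; exists (s ** a), b; rewrite rmulA; split; auto.
case: n => [|n] /=; first exact: idealMr (is_ideal_gen _).
move=> [a [b [Ha Hb ->]]]; exists a, (b ** s); rewrite rmulA; split=> //.
exact: idealMr (is_ideal_gen _) Hb.
Qed.

Lemma cprod_split p q z : cprod (p + q).+1 z ->
  exists a b, [/\ cprod p a, cprod q b & z = a ** b].
Proof.
elim: q z => [|q IH] z; first by rewrite addn0.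
rewrite addnS /= => -[y [c [/IH [a [b [Ha Hb ->]]] Hc ->]]].
by exists a, (b ** c); rewrite rmulA; split=> //; exists b, c.
Qed.

Lemma cprod_rprod n x s : cprod n x -> {in s, forall y, comm_ideal y} ->
  cprod (n + size s) (rprod x s).
Proof.
elim: s n x => [|a s IH] n x Hx Hs /=; first by rewrite addn0.
rewrite -addSnnS; apply: IH => [|y ys]; last by apply: Hs; rewrite inE ys orbT.
by exists x, a; split=> //; apply: Hs; rewrite inE eqxx.
Qed.

End Products.

Section CommIdealImage.
Variables (R S : rng) (f : R -> S).
Hypothesis fD : forall x y, f (x + y) = f x + f y.
Hypothesis fM : forall x y, f (x ** y) = f x ** f y.
Hypothesis f_comm_ideal : forall z, comm_ideal z <-> exists x, f x = z.

Definition img (P : R -> Prop) : S -> Prop := fun z => exists2 r, P r & f r = z.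

Lemma f0 : f 0 = 0.
Proof. by apply: (addrI (f 0)); rewrite -fD !addr0. Qed.

Lemma fB x y : f (x - y) = f x - f y.
Proof. by apply: (addIr (f y)); rewrite -fD !subrK. Qed.

Lemma f_rprod x s : f (rprod x s) = rprod (f x) (map f s).
Proof. by elim: s x => //= a s IH x; rewrite IH fM. Qed.

Lemma img_derivedS k j n j' : comm_ideal j -> comm_ideal j' ->
  comm_ideal_of (img (derived k)) n -> img (derived k.+1) (j ** n ** j').
Proof.
have id_derived : is_ideal (@derived R k.+1) by exact: is_ideal_gen.
have id_comm : is_ideal (@comm_ideal S) by exact: is_ideal_gen.
pose Q n := forall j j', comm_ideal j -> comm_ideal j' -> img (derived k.+1) (j ** n ** j').
move=> Hj Hj' Hn; apply: (Hn Q) => // {Hj Hj' Hn j j'}.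
  split=> [j j' _ _ | x y Qx Qy j j' Hj Hj' | s x Qx j j' Hj Hj' | s x Qx j j' Hj Hj'].
  - by exists 0; [exact: ideal0 id_derived | rewrite f0 rmulr0 rmul0r].
  - rewrite rmulBr rmulBl.
    have [r1 Hr1 <-] := Qx _ _ Hj Hj'; have [r2 Hr2 <-] := Qy _ _ Hj Hj'.
    by exists (r1 - r2); [exact: (idealB id_derived Hr1 Hr2) | rewrite fB].
  - by rewrite !rmulA; apply: Qx => //; exact: (idealMr id_comm).
  - by rewrite rmulA -(rmulA _ s); apply: Qx => //; exact: (idealMl id_comm).
move=> _ [_ [_ [[a Ha <-] [b Hb <-] ->]]] j j' /f_comm_ideal [rj <-] /f_comm_ideal [rj' <-].
exists (rj ** commutator a b ** rj'); last by rewrite /commutator !fM fB !fM.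
by apply: (idealMr id_derived); apply: (idealMl id_derived); apply: gen_ideal_sub; exists a, b.
Qed.

Lemma cprod_img_derived k : exists m, forall z, cprod m z -> img (derived k) z.
Proof.
elim: k => [|k [m IH]]; first by exists 0%N => z /f_comm_ideal [r <-]; exists r.
exists (m + ((m + m.+1).+1 + m).+1).+1 => z.
move=> /cprod_split [x1 [y [H1 /cprod_split [w [x4 [Hw H4 ->]]] ->]]].
move: Hw => /cprod_split [x2 [y3 [H2 [x3 [c [H3 Hc ->]]] ->]]].
have Hn := comm_ideal_of_mul2 (cprod_semigroup_ideal S m) H2 H3 Hc.
have := img_derivedS (cprod_comm_ideal H1) (cprod_comm_ideal H4) (comm_ideal_ofS IH Hn).
by rewrite !rmulA.
Qed.

Lemma rnilpotent_of_comm_ideal_image : injective f -> jsolvable R -> rnilpotent R.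
Proof.
move=> finj [n derived0]; have [m Hm] := cprod_img_derived n.
exists m => x s size_s; apply: finj; rewrite f0.
have Hx : cprod 0 (f x) by apply/f_comm_ideal; exists x.
have Hs : {in map f s, forall y, comm_ideal y}.
  by move=> _ /mapP [a _ ->]; apply/f_comm_ideal; exists a.
have := cprod_rprod Hx Hs; rewrite add0n size_map size_s -f_rprod.
by move=> /Hm [r /derived0 -> <-]; rewrite f0.
Qed.

End CommIdealImage.

Lemma jsolvable_comm (R : rng) : commutative (@rmul R) -> jsolvable R.
Proof.
move=> mulC; exists 1%N => x Hx; apply: (Hx (fun y => y = 0)).
  by split=> [|a b -> ->|r a ->|r a ->]; rewrite ?subrr ?rmulr0 ?rmul0r.
by move=> _ [a [b [_ _ ->]]]; rewrite /commutator mulC subrr.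
Qed.

Lemma rng_of_not_rnilpotent (T : nzRingType) : ~ rnilpotent (rng_of T).
Proof.
move=> [m nilT]; have := nilT 1 (nseq m 1) (size_nseq m 1).
have -> : rprod (1 : rng_of T) (nseq m 1) = 1 by elim: m {nilT} => //= m; rewrite mulr1.
by apply/eqP; rewrite oner_eq0.
Qed.

Theorem proposition5p4 :
  (forall R : rng, jsolvable R ->
     forall S : rng, iso_comm_ideal R S -> rnilpotent R)
  /\
  (forall T : comNzRingType, forall S : rng, ~ iso_comm_ideal (rng_of T) S).
Proof.
have nilpotent R S : jsolvable R -> iso_comm_ideal R S -> rnilpotent R.
  by move=> solR [f [finj fD fM fim]]; exact: rnilpotent_of_comm_ideal_image fD fM fim finj solR.
split=> [R solR S | T S isoT]; first exact: nilpotent.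
apply: (@rng_of_not_rnilpotent T); apply: nilpotent isoT.
exact: (@jsolvable_comm (rng_of T) (@mulrC T)).
Qed.
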